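(* Let $m\ge1$ and let $Z_l=\{z_{j,l}\}_{j=1}^m$, $l=1,2$, be two $m$-point subsets of the unit circle with no common points, labeled as $z_{j,l}=e^{ix_{j,l}}$ with $0\le x_{1,l}<x_{2,l}<\dots<x_{m,l}<2\pi$. For $k=1,\dots,m$ put $$\omega_k=\frac{\prod_{j=1}^m\sin\frac{x_{k,1}-x_{j,2}}{2}}{\prod_{j=1,\,j\ne k}^{m}\sin\frac{x_{k,1}-x_{j,1}}{2}}\quad(\ne 0).$$ Then $Z_1$ and $Z_2$ interlace if and only if all the numbers $\omega_1,\dots,\omega_m$ have the same sign.
   Context: Two disjoint $m$-point sets $Z_1,Z_2$ on the unit circle interlace if, with the labeling above and (after possibly swapping the roles of the sets) $x_{1,1}<x_{1,2}$, one has $x_{1,1}<x_{1,2}<x_{2,1}<x_{2,2}<\dots<x_{m,1}<x_{m,2}$; equivalently, each open arc between cyclically consecutive points of $Z_1$ contains exactly one point of $Z_2$. *)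

From Stdlib Require Import Reals Arith.
Open Scope R_scope.

Fixpoint prodR (n : nat) (f : nat -> R) : R :=
  match n with
  | O => 1
  | S n' => prodR n' f * f n'
  end.

(* A set of m points e^{i x_j}, j = 0..m-1, labeled increasingly with
   0 <= x_0 < x_1 < ... < x_{m-1} < 2*PI. *)
Definition labeled_angles (m : nat) (x : nat -> R) : Prop :=
  (forall j, (j < m)%nat -> 0 <= x j < 2 * PI) /\
  (forall j, (S j < m)%nat -> x j < x (S j)).

Definition interlace_chain (m : nat) (a b : nat -> R) : Prop :=
  forall j, (j < m)%nat -> a j < b j /\ ((S j < m)%nat -> b j < a (S j)).

Definition interlace (m : nat) (x1 x2 : nat -> R) : Prop :=
  interlace_chain m x1 x2 \/ interlace_chain m x2 x1.

(* omega_k, with indices shifted to 0..m-1 *)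
Definition omega (m : nat) (x1 x2 : nat -> R) (k : nat) : R :=
  prodR m (fun j => sin ((x1 k - x2 j) / 2)) /
  prodR m (fun j => if Nat.eqb j k then 1 else sin ((x1 k - x1 j) / 2)).

From Stdlib Require Import Reals Arith Lia Lra.
Open Scope R_scope.

(* For angles a, b in [0, 2 pi), sin ((a - b) / 2) is negative exactly when
   a < b.  Hence the sign of omega_k is (-1)^(N_k + m - 1 - k), where N_k is
   the number of points of Z_2 above x_{k,1}.  N is nonincreasing with values
   in [0, m]; all omega_k have the same sign iff N_k + k has constant parity,
   which forces N to drop by exactly one at each step: N_k = m - k or
   N_k = m - 1 - k, and these are precisely the two interlacing patterns. *)

Definition Rltb (a b : R) : bool := if Rlt_dec a b then true else false.

Lemma Rltb_spec a b : Rltb a b = true <-> a < b.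
Proof. unfold Rltb; destruct (Rlt_dec a b); split; easy. Qed.

Fixpoint count_upto (n : nat) (p : nat -> bool) : nat :=
  match n with
  | O => O
  | S n' => (count_upto n' p + Nat.b2n (p n'))%nat
  end.

Lemma count_upto_ext n p q :
  (forall j, (j < n)%nat -> p j = q j) -> count_upto n p = count_upto n q.
Proof.
  induction n as [|n IH]; intros Hpq; cbn; [easy|].
  rewrite IH by (intros; apply Hpq; lia). rewrite Hpq by lia. reflexivity.
Qed.

Lemma count_upto_le n p : (count_upto n p <= n)%nat.
Proof. induction n; cbn; [lia|]. destruct (p n); cbn; lia. Qed.

Lemma count_upto_mono n p q :
  (forall j, (j < n)%nat -> p j = true -> q j = true) ->
  (count_upto n p <= count_upto n q)%nat.
Proof.
  induction n as [|n IH]; intros Hpq; cbn; [lia|].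
  assert (IHn := IH (fun j Hj => Hpq j ltac:(lia))).
  specialize (Hpq n ltac:(lia)).
  destruct (p n), (q n); cbn; [lia | discriminate (Hpq eq_refl) | lia | lia].
Qed.

Lemma count_upto_leb n t : count_upto n (Nat.leb t) = (n - t)%nat.
Proof.
  induction n as [|n IH]; [reflexivity|].
  cbn [count_upto]. rewrite IH. destruct (Nat.leb_spec t n); cbn [Nat.b2n]; lia.
Qed.

Section UpwardClosed.

Variables (n : nat) (p : nat -> bool).
Hypothesis p_upward :
  forall j j', (j <= j')%nat -> (j' < n)%nat -> p j = true -> p j' = true.

Lemma count_upto_upward j :
  (j < n)%nat -> p j = true <-> (n - count_upto n p <= j)%nat.
Proof.
  revert j p_upward. induction n as [|n' IH]; intros j Hup Hj; [lia|]. cbn [count_upto].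
  destruct (p n') eqn:Hn'; cbn [Nat.b2n].
  - destruct (Nat.eq_dec j n') as [->|Hne]; [split; intros; [lia|easy]|].
    assert (Hup' : forall a b, (a <= b)%nat -> (b < n')%nat -> p a = true -> p b = true)
      by (intros a b Hab Hb; apply Hup; lia).
    rewrite (IH j Hup') by lia. lia.
  - assert (Hnone : forall j, (j <= n')%nat -> p j = false).
    { intros i Hi. destruct (p i) eqn:Hpi; [|easy].
      rewrite <- Hn'. symmetry. apply (Hup i); auto; lia. }
    assert (Hzero : count_upto n' p = 0%nat).
    { rewrite (count_upto_ext n' p (fun _ => false)) by (intros; apply Hnone; lia).
      clear. induction n'; cbn [count_upto Nat.b2n]; lia. }
    rewrite Hnone by lia. split; [discriminate | lia].
Qed.

Lemma count_upto_threshold t :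
  (t <= n)%nat ->
  count_upto n p = (n - t)%nat <-> (forall j, (j < n)%nat -> p j = true <-> (t <= j)%nat).
Proof.
  intros Ht. split.
  - intros Hc j Hj. rewrite count_upto_upward, Hc by easy. lia.
  - intros Hthr. rewrite <- count_upto_leb. apply count_upto_ext.
    intros j Hj. apply Bool.eq_iff_eq_true. rewrite Hthr, Nat.leb_le by easy. easy.
Qed.

End UpwardClosed.

Lemma even_iff_double n b :
  Nat.even n = b <-> exists q, n = (2 * q + Nat.b2n (negb b))%nat.
Proof.
  split.
  - intros <-. destruct (Nat.even n) eqn:Hn.
    + apply Nat.even_spec in Hn as [q ->]. exists q. cbn. lia.
    + rewrite <- Nat.negb_odd in Hn. apply Bool.negb_false_iff, Nat.odd_spec in Hn as [q ->].
      exists q. reflexivity.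
  - intros [q ->]. rewrite Nat.add_comm, Nat.even_add_mul_2. destruct b; reflexivity.
Qed.

Lemma pow_m1_parity e : (-1) ^ e = if Nat.even e then 1 else -1.
Proof.
  destruct (Nat.even e) eqn:He; apply even_iff_double in He as [q ->]; cbn.
  - rewrite Nat.add_0_r. apply pow_1_even.
  - rewrite Nat.add_1_r. apply pow_1_odd.
Qed.

Lemma sign_pow_m1 e w :
  0 < (-1) ^ e * w -> (0 < w <-> Nat.even e = true) /\ (w < 0 <-> Nat.even e = false).
Proof.
  rewrite pow_m1_parity. destruct (Nat.even e); intros Hw; split; split; intros; lra || easy.
Qed.

Lemma prodR_sign n f :
  (forall j, (j < n)%nat -> f j <> 0) ->
  0 < (-1) ^ count_upto n (fun j => Rltb (f j) 0) * prodR n f.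
Proof.
  induction n as [|n IH]; intros Hf; cbn; [lra|].
  assert (IHn := IH (fun j Hj => Hf j ltac:(lia))).
  assert (Hfn := Hf n ltac:(lia)).
  rewrite pow_add. unfold Rltb at 2. destruct (Rlt_dec (f n) 0); cbn.
  - replace (_ * (-1 * 1) * (prodR n f * f n)) with
      ((-1) ^ count_upto n (fun j => Rltb (f j) 0) * prodR n f * - f n) by ring.
    apply Rmult_lt_0_compat; lra.
  - replace (_ * 1 * (prodR n f * f n)) with
      ((-1) ^ count_upto n (fun j => Rltb (f j) 0) * prodR n f * f n) by ring.
    apply Rmult_lt_0_compat; lra.
Qed.

Lemma sign_div a b u v :
  0 < (-1) ^ a * u -> 0 < (-1) ^ b * v -> 0 < (-1) ^ (a + b) * (u / v).
Proof.
  rewrite !pow_m1_parity, Nat.even_add. intros Hu Hv.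
  assert (Hinv : (0 < v -> 0 < / v) /\ (v < 0 -> / v < 0)).
  { split; intros; [apply Rinv_0_lt_compat | apply Rinv_lt_0_compat]; easy. }
  unfold Rdiv. destruct (Nat.even a), (Nat.even b); cbn in *; nra.
Qed.

Lemma sin_half_diff_neg_iff a b :
  0 <= a < 2 * PI -> 0 <= b < 2 * PI -> sin ((a - b) / 2) < 0 <-> a < b.
Proof.
  intros Ha Hb. split; intros Hab.
  - destruct (Rtotal_order a b) as [|[->|Hba]]; [easy| |].
    + replace ((b - b) / 2) with 0 in Hab by field. rewrite sin_0 in Hab. lra.
    + assert (0 < sin ((a - b) / 2)) by (apply sin_gt_0; lra). lra.
  - apply sin_lt_0_var; lra.
Qed.

Lemma sin_half_diff_neq0 a b :
  0 <= a < 2 * PI -> 0 <= b < 2 * PI -> a <> b -> sin ((a - b) / 2) <> 0.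
Proof.
  intros Ha Hb Hab. destruct (Rtotal_order a b) as [Hlt|[Heq|Hgt]]; [|easy|].
  - apply Rlt_not_eq, sin_half_diff_neg_iff; easy.
  - apply Rgt_not_eq, sin_gt_0; lra.
Qed.

Section LabeledAngles.

Variables (m : nat) (x : nat -> R).
Hypothesis x_labeled : labeled_angles m x.

Lemma labeled_angles_lt j j' : (j < j')%nat -> (j' < m)%nat -> x j < x j'.
Proof.
  destruct x_labeled as [_ Hsucc]. induction j' as [|j' IH]; intros Hjj' Hj'; [lia|].
  destruct (Nat.eq_dec j j') as [->|Hne]; [apply Hsucc; easy|].
  apply Rlt_trans with (x j'); [apply IH; lia | apply Hsucc; easy].
Qed.

Lemma labeled_angles_le j j' : (j <= j')%nat -> (j' < m)%nat -> x j <= x j'.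
Proof.
  intros Hjj' Hj'. destruct (Nat.eq_dec j j') as [->|Hne]; [lra|].
  apply Rlt_le, labeled_angles_lt; lia.
Qed.

Lemma labeled_angles_lt_iff j j' :
  (j < m)%nat -> (j' < m)%nat -> x j < x j' <-> (j < j')%nat.
Proof.
  intros Hj Hj'. split; [|intros; apply labeled_angles_lt; easy].
  intros Hx. destruct (Nat.lt_ge_cases j j') as [|Hge]; [easy|].
  assert (x j' <= x j) by (apply labeled_angles_le; easy). lra.
Qed.

Lemma labeled_angles_inj j j' :
  (j < m)%nat -> (j' < m)%nat -> x j = x j' -> j = j'.
Proof.
  intros Hj Hj' Hx. destruct (Nat.lt_total j j') as [Hlt|[|Hgt]]; [|easy|].
  - apply labeled_angles_lt in Hlt; [lra|easy].
  - apply labeled_angles_lt in Hgt; [lra|easy].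
Qed.

End LabeledAngles.

Lemma interlace_chain_iff_order m a b :
  labeled_angles m a ->
  (forall j k, (j < m)%nat -> (k < m)%nat -> a j <> b k) ->
  interlace_chain m a b <->
  (forall k j, (k < m)%nat -> (j < m)%nat -> a k < b j <-> (k <= j)%nat).
Proof.
  intros La Hdisj. split.
  - intros Hchain k j Hk Hj. split; intros Hkj.
    + destruct (Nat.le_gt_cases k j) as [|Hjk]; [easy|].
      destruct (Hchain j Hj) as [_ Hnext].
      assert (a (S j) <= a k) by (apply (labeled_angles_le m); easy).
      specialize (Hnext ltac:(lia)). lra.
    + destruct (Hchain j Hj) as [Hjj _].
      assert (a k <= a j) by (apply (labeled_angles_le m); easy). lra.
  - intros Horder j Hj. split; [apply Horder; lia|].
    intros Hsj. assert (Hnot : ~ a (S j) < b j) by (rewrite Horder; lia).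
    specialize (Hdisj (S j) j Hsj Hj). lra.
Qed.

Lemma nonincreasing_parity_staircase (G : nat -> nat) m b :
  (forall k, (k < m)%nat -> (G k <= m)%nat) ->
  (forall k, (S k < m)%nat -> (G (S k) <= G k)%nat) ->
  (forall k, (k < m)%nat -> Nat.even (G k + (m - S k)) = b) <->
  (forall k, (k < m)%nat -> G k = (m - k - Nat.b2n b)%nat).
Proof.
  intros Hbound Hnoninc.
  assert (Hb : (Nat.b2n b + Nat.b2n (negb b) = 1)%nat) by (destruct b; reflexivity).
  split.
  - intros Hpar.
    assert (Hparity : forall k, (k < m)%nat ->
              exists q, (G k + (m - S k) = 2 * q + Nat.b2n (negb b))%nat).
    { intros k Hk. apply even_iff_double, Hpar, Hk. }
    (* equal parities of G k + (m - S k) forbid G (S k) = G k *)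
    assert (Hdrop : forall k, (S k < m)%nat -> (G (S k) + 1 <= G k)%nat).
    { intros k Hk. destruct (Hparity k) as [q Hq]; [lia|].
      destruct (Hparity (S k) Hk) as [q' Hq']. specialize (Hnoninc k Hk). lia. }
    assert (Hdrops : forall d k, (k + d < m)%nat -> (G (k + d) + d <= G k)%nat).
    { induction d as [|d IH]; intros k Hkd; [rewrite !Nat.add_0_r; lia|].
      specialize (IH k ltac:(lia)). specialize (Hdrop (k + d)%nat ltac:(lia)).
      replace (k + S d)%nat with (S (k + d)) by lia. lia. }
    intros k Hk.
    destruct (Hparity 0%nat) as [q0 Hq0]; [lia|].
    destruct (Hparity (m - 1)%nat) as [q1 Hq1]; [lia|].
    assert (Hfirst := Hdrops k 0%nat ltac:(lia)).
    assert (Hlast := Hdrops (m - 1 - k)%nat k ltac:(lia)).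
    replace (k + (m - 1 - k))%nat with (m - 1)%nat in Hlast by lia.
    specialize (Hbound 0%nat ltac:(lia)). cbn in Hfirst. lia.
  - intros HG k Hk. apply even_iff_double. exists (m - S k)%nat. rewrite HG by easy. lia.
Qed.

Section OmegaSigns.

Variables (m : nat) (x1 x2 : nat -> R).
Hypotheses (L1 : labeled_angles m x1) (L2 : labeled_angles m x2).
Hypothesis disjoint : forall j k, (j < m)%nat -> (k < m)%nat -> x1 j <> x2 k.

Definition nb_above (k : nat) : nat := count_upto m (fun j => Rltb (x1 k) (x2 j)).

Lemma nb_above_le k : (nb_above k <= m)%nat.
Proof. apply count_upto_le. Qed.

Lemma nb_above_nonincreasing k : (S k < m)%nat -> (nb_above (S k) <= nb_above k)%nat.
Proof.
  intros Hk. apply count_upto_mono. intros j _. rewrite !Rltb_spec.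
  assert (x1 k < x1 (S k)) by (apply (proj2 L1); easy). lra.
Qed.

Lemma nb_above_eq_iff k t :
  (k < m)%nat -> (t <= m)%nat ->
  nb_above k = (m - t)%nat <->
  (forall j, (j < m)%nat -> x1 k < x2 j <-> (t <= j)%nat).
Proof.
  intros Hk Ht. unfold nb_above. rewrite count_upto_threshold by
    (easy || (intros j j' Hjj' Hj'; rewrite !Rltb_spec;
              assert (x2 j <= x2 j') by (apply (labeled_angles_le m); easy); lra)).
  split; intros H j Hj; rewrite <- H, Rltb_spec by easy; reflexivity.
Qed.

Lemma omega_sign k :
  (k < m)%nat -> 0 < (-1) ^ (nb_above k + (m - S k)) * omega m x1 x2 k.
Proof.
  intros Hk. destruct L1 as [A1 _]. destruct L2 as [A2 _].
  assert (Hnum : count_upto m (fun j => Rltb (sin ((x1 k - x2 j) / 2)) 0) = nb_above k).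
  { apply count_upto_ext. intros j Hj. apply Bool.eq_iff_eq_true.
    rewrite !Rltb_spec. apply sin_half_diff_neg_iff; auto. }
  assert (Hden : count_upto m
            (fun j => Rltb (if Nat.eqb j k then 1 else sin ((x1 k - x1 j) / 2)) 0)
          = (m - S k)%nat).
  { rewrite <- count_upto_leb. apply count_upto_ext. intros j Hj.
    apply Bool.eq_iff_eq_true. rewrite Rltb_spec, Nat.leb_le.
    destruct (Nat.eqb_spec j k) as [->|Hjk]; [split; intros; lra || lia|].
    rewrite sin_half_diff_neg_iff, (labeled_angles_lt_iff m) by auto. lia. }
  unfold omega. rewrite <- Hnum, <- Hden. apply sign_div; apply prodR_sign; intros j Hj.
  - apply sin_half_diff_neq0; auto.
  - destruct (Nat.eqb_spec j k) as [->|Hjk]; [lra|].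
    apply sin_half_diff_neq0; auto. intros Hx. apply Hjk.
    apply (labeled_angles_inj m x1); auto.
Qed.

Lemma same_sign_iff_parity :
  (forall k, (k < m)%nat -> 0 < omega m x1 x2 k) \/
  (forall k, (k < m)%nat -> omega m x1 x2 k < 0) <->
  exists b, forall k, (k < m)%nat -> Nat.even (nb_above k + (m - S k)) = b.
Proof.
  split.
  - intros [Hpos|Hneg]; [exists true|exists false]; intros k Hk;
      apply (sign_pow_m1 _ _ (omega_sign k Hk)); auto.
  - intros [[|] Hb]; [left|right]; intros k Hk;
      apply (sign_pow_m1 _ _ (omega_sign k Hk)); auto.
Qed.

Lemma interlace_iff_nb_above :
  interlace m x1 x2 <->
  exists b, forall k, (k < m)%nat -> nb_above k = (m - k - Nat.b2n b)%nat.
Proof.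
  assert (Hdisj' : forall j k, (j < m)%nat -> (k < m)%nat -> x2 j <> x1 k)
    by (intros j k Hj Hk Hx; apply (disjoint k j); auto).
  assert (Hchain12 : interlace_chain m x1 x2 <->
                     forall k, (k < m)%nat -> nb_above k = (m - k)%nat).
  { rewrite interlace_chain_iff_order by easy.
    split; intros H k Hk; [apply nb_above_eq_iff; auto; lia|].
    intros j Hj. apply nb_above_eq_iff; auto; lia. }
  assert (Hchain21 : interlace_chain m x2 x1 <->
                     forall k, (k < m)%nat -> nb_above k = (m - S k)%nat).
  { rewrite interlace_chain_iff_order by easy.
    assert (Hflip : forall k j, (k < m)%nat -> (j < m)%nat ->
                      x1 k < x2 j <-> ~ x2 j < x1 k).
    { intros k j Hk Hj. specialize (disjoint k j Hk Hj). lra. }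
    split.
    - intros H k Hk. apply nb_above_eq_iff; [easy|lia|].
      intros j Hj. rewrite Hflip, H by easy. lia.
    - intros H j k Hj Hk.
      assert (Hjk := proj1 (nb_above_eq_iff k (S k) Hk Hk) (H k Hk) j Hj).
      rewrite Hflip in Hjk by easy.
      destruct (Rlt_dec (x2 j) (x1 k)) as [Hlt|Hnlt].
      + split; intros _; [|easy]. enough (~ (S k <= j)%nat) by lia. rewrite <- Hjk. tauto.
      + split; [easy|]. intros Hle. enough (S k <= j)%nat by lia. apply Hjk, Hnlt. }
  unfold interlace. rewrite Hchain12, Hchain21. split.
  - intros [H|H]; [exists false|exists true]; intros k Hk; rewrite H by easy; cbn; lia.
  - intros [[|] H]; [right|left]; intros k Hk; rewrite H by easy; cbn; lia.
Qed.

End OmegaSigns.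

Theorem proposition3 (m : nat) (x1 x2 : nat -> R) :
  (1 <= m)%nat ->
  labeled_angles m x1 ->
  labeled_angles m x2 ->
  (forall j k, (j < m)%nat -> (k < m)%nat -> x1 j <> x2 k) ->
  (interlace m x1 x2 <->
   ((forall k, (k < m)%nat -> 0 < omega m x1 x2 k) \/
    (forall k, (k < m)%nat -> omega m x1 x2 k < 0))).
Proof.
  intros _ L1 L2 Hdisj.
  rewrite interlace_iff_nb_above, same_sign_iff_parity by easy.
  split; intros [b Hb]; exists b;
    apply (nonincreasing_parity_staircase (nb_above m x1 x2));
    auto using nb_above_le, nb_above_nonincreasing.
Qed.
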